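(* Endow $\mathbb{R}^{t+1}$ with the inner product $(x,y)=\sum_{i=1}^{t+1}b^ix_iy_i$, where $b^1,\dots,b^{t+1}$ are positive integers, and let $\overline{\mathcal C}=\{x\in\mathbb{R}^{t+1}:x_1\le\cdots\le x_{t+1}\}$. Let $v\in\mathbb{R}^{t+1}\setminus\{0\}$ with $\sum_i v_ib^i=0$, and define $\mu_v(\Gamma)=(\Gamma,v)/\|\Gamma\|$ on $\overline{\mathcal C}\setminus\{0\}$. Assume some $\Gamma\in\overline{\mathcal C}$ has $\mu_v(\Gamma)>0$. Let $b_0=0$, $b_i=b^1+\dots+b^i$, $w_0=0$, $w_i=-\sum_{k\le i}b^kv_k$ (so $w_{t+1}=0$), let $(b_i,\widetilde w_i)$ be the points of the convex envelope (least concave majorant) of the piecewise linear graph through the points $(b_i,w_i)$, $i=0,\dots,t+1$, and define $\Gamma_v=(\Gamma_1,\dots,\Gamma_{t+1})$ by $\Gamma_i=-(\widetilde w_i-\widetilde w_{i-1})/b^i$. Then $\Gamma_v\in\overline{\mathcal C}\setminus\{0\}$ and $\Gamma_v$ attains the maximum of $\mu_v$ on $\overline{\mathcal C}\setminus\{0\}$. *)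

(* R : realType, vectors in R^(t+1) are 'rV[R]_(t.+1),
   index i : 'I_(t.+1) (0-based) corresponds to the paper's index i+1. *)
From HB Require Import structures.
From mathcomp Require Import all_boot all_order all_algebra.
From mathcomp Require Import reals.
Set Implicit Arguments. Unset Strict Implicit. Unset Printing Implicit Defensive.
Import Order.TTheory GRing.Theory Num.Theory.
Local Open Scope ring_scope.

Section Defs.
Variables (R : realType) (t : nat) (b : 'I_t.+1 -> nat).

Definition wip (x y : 'rV[R]_t.+1) : R :=
  \sum_(i < t.+1) (b i)%:R * x ord0 i * y ord0 i.

Definition wnorm (x : 'rV[R]_t.+1) : R := Num.sqrt (wip x x).

Definition Cbar (x : 'rV[R]_t.+1) : Prop :=
  forall i j : 'I_t.+1, (i <= j)%N -> x ord0 i <= x ord0 j.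

Definition mu (v G : 'rV[R]_t.+1) : R := wip G v / wnorm G.

Definition bsum (k : nat) : R := (\sum_(i < t.+1 | (i < k)%N) b i)%:R.

Definition wpt (v : 'rV[R]_t.+1) (k : nat) : R :=
  - \sum_(i < t.+1 | (i < k)%N) (b i)%:R * v ord0 i.

Definition majorizes_graph (v : 'rV[R]_t.+1) (f : R -> R) : Prop :=
  forall (k : 'I_t.+1) (x : R), bsum k <= x -> x <= bsum k.+1 ->
    wpt v k + (x - bsum k) / (b k)%:R * (wpt v k.+1 - wpt v k) <= f x.

Definition concave_on (a c : R) (f : R -> R) : Prop :=
  forall x y l : R, a <= x -> x <= c -> a <= y -> y <= c -> 0 <= l -> l <= 1 ->
    l * f x + (1 - l) * f y <= f (l * x + (1 - l) * y).

Definition least_concave_majorant (v : 'rV[R]_t.+1) (f : R -> R) : Prop :=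
  [/\ concave_on 0 (bsum t.+1) f, majorizes_graph v f &
      forall g : R -> R, concave_on 0 (bsum t.+1) g -> majorizes_graph v g ->
        forall x, 0 <= x -> x <= bsum t.+1 -> f x <= g x].

Definition Gamma_v (f : R -> R) : 'rV[R]_t.+1 :=
  \row_(i < t.+1) (- (f (bsum i.+1) - f (bsum i)) / (b i)%:R).

End Defs.

(* Let f be the envelope and D_k := f(b_k) - w_k; then D_k >= 0 and D vanishes at both ends,
   so summation by parts gives (G, Gamma_v) - (G, v) = sum_k (G_(k+1) - G_k) D_k >= 0 for every
   G in the cone. For G = Gamma_v the sum vanishes: at an interior node the envelope either touches
   the graph or does not bend, since otherwise lowering it near that node by a line of intermediate
   slope would give a smaller concave majorant. Cauchy-Schwarz then yields
   mu_v(G) <= (G, Gamma_v) / |G| <= |Gamma_v| = mu_v(Gamma_v). Gamma_v lies in the cone because the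
   chord slopes of a concave function decrease, and the envelope exists as the pointwise infimum of
   all concave majorants. *)

From HB Require Import structures.
From mathcomp Require Import all_boot all_order all_algebra.
From mathcomp Require Import reals classical_sets.
From mathcomp Require Import ring lra.
Import Order.TTheory GRing.Theory Num.Theory.
Set Implicit Arguments. Unset Strict Implicit.
Local Open Scope ring_scope.

Definition slope (R : realType) (f : R -> R) (x y : R) := (f y - f x) / (y - x).

Section ConcaveSlopes.
Variables (R : realType) (a c : R) (f : R -> R).
Hypothesis fcav : concave_on a c f.

Lemma concave_three_point p q r : a <= p -> p <= q -> q <= r -> r <= c ->
  (r - q) * f p + (q - p) * f r <= (r - p) * f q.
Proof.
move=> ap pq qr rc; have [pr | rp] := ltP p r; last first.
  have -> : q = p by lra.
  have -> : r = p by lra.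
  lra.
have rp0 : r - p != 0 by rewrite subr_eq0 gt_eqF.
set l := (r - q) / (r - p).
have l_ge0 : 0 <= l by rewrite divr_ge0 ?subr_ge0 // ltW.
have l_le1 : l <= 1 by rewrite ler_pdivrMr ?subr_gt0 // mul1r; lra.
have lq : l * p + (1 - l) * r = q by rewrite /l; field.
have key : (r - p) * (l * f p + (1 - l) * f r) = (r - q) * f p + (q - p) * f r.
  by rewrite /l; field.
rewrite -key; apply: ler_wpM2l; first lra.
have pc : p <= c by lra.
have ar : a <= r by lra.
by have := fcav ap pc ar rc l_ge0 l_le1; rewrite lq.
Qed.

Lemma concave_below_secant_left u p q : a <= u -> u <= p -> p < q -> q <= c ->
  f u <= f q + slope f p q * (u - q).
Proof.
move=> au up pq qc; have qp : 0 < q - p by rewrite subr_gt0.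
have three := concave_three_point au up (ltW pq) qc.
rewrite -subr_ge0 -(pmulr_rge0 _ qp).
have -> : (q - p) * (f q + slope f p q * (u - q) - f u) =
          (u - p) * f q + (q - u) * f p - (q - p) * f u.
  by rewrite /slope; field; rewrite subr_eq0 gt_eqF.
lra.
Qed.

Lemma concave_below_secant_right p q u : a <= p -> p < q -> q <= u -> u <= c ->
  f u <= f p + slope f p q * (u - p).
Proof.
move=> ap pq qu uc; have qp : 0 < q - p by rewrite subr_gt0.
have three := concave_three_point ap (ltW pq) qu uc.
rewrite -subr_ge0 -(pmulr_rge0 _ qp).
have -> : (q - p) * (f p + slope f p q * (u - p) - f u) =
          (q - u) * f p + (u - p) * f q - (q - p) * f u.
  by rewrite /slope; field; rewrite subr_eq0 gt_eqF.
lra.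
Qed.

Lemma concave_slope_antitone p q r s :
  a <= p -> p < q -> q <= r -> r < s -> s <= c -> slope f r s <= slope f p q.
Proof.
move=> ap pq qr rs sc; have sp : 0 < s - p by lra.
apply: (@le_trans _ _ ((f s - f p) / (s - p))).
  have := concave_below_secant_left ap (ltW (lt_le_trans pq qr)) rs sc.
  rewrite ler_pdivlMr //; lra.
have := concave_below_secant_right ap pq (ltW (le_lt_trans qr rs)) sc.
rewrite ler_pdivrMr //; lra.
Qed.

Lemma concave_below_kink p q r u :
  a <= p -> p < q -> q < r -> r <= c -> a <= u -> u <= c -> u <= p \/ r <= u ->
  f u + (slope f p q - slope f q r) / 2 * `|u - q|
    <= f q + (slope f p q + slope f q r) / 2 * (u - q).
Proof.
move=> ap pq qr rc au uc [up | ru].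
  have := concave_below_secant_left au up pq (ltW (lt_le_trans qr rc)).
  rewrite ler0_norm; lra.
have := concave_below_secant_right (le_trans ap (ltW pq)) qr ru uc.
rewrite ger0_norm; lra.
Qed.

End ConcaveSlopes.

Lemma affine_concave (R : realType) (a c al be : R) : concave_on a c (fun x => al + be * x).
Proof. by move=> x y l *; lra. Qed.

Lemma sumr_by_parts (R : comPzRingType) n (g E : nat -> R) :
  \sum_(i < n) g i * (E i - E i.+1) =
  g 0%N * E 0%N - g n * E n + \sum_(i < n) (g i.+1 - g i) * E i.+1.
Proof.
elim: n => [|n IH]; first by rewrite !big_ord0 subrr addr0.
by rewrite !big_ord_recr /= IH; ring.
Qed.

Section WeightedInnerProduct.
Variables (R : realType) (t : nat) (b : 'I_t.+1 -> nat).
Implicit Types x y : 'rV[R]_t.+1.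

Lemma wip_ge0 x : 0 <= wip b x x.
Proof. by apply: sumr_ge0 => i _; rewrite -mulrA mulr_ge0 ?ler0n // -expr2 sqr_ge0. Qed.

Lemma wip0r x : wip b x 0 = 0.
Proof. by rewrite /wip big1 // => i _; rewrite mxE mulr0. Qed.

Hypothesis hb : forall i, (0 < b i)%N.

Lemma wip_gt0 x : x != 0 -> 0 < wip b x x.
Proof.
move=> x0; rewrite lt_neqAle wip_ge0 andbT eq_sym; apply: contra x0 => /eqP xx0.
have term_ge0 i : true -> 0 <= (b i)%:R * x ord0 i * x ord0 i.
  by move=> _; rewrite -mulrA mulr_ge0 ?ler0n // -expr2 sqr_ge0.
apply/eqP/rowP => i; rewrite mxE.
have /eqP := @psumr_eq0P R _ xpredT _ term_ge0 xx0 i isT.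
by rewrite -mulrA mulf_eq0 pnatr_eq0 eqn0Ngt hb /= mulf_eq0 orbb => /eqP.
Qed.

Lemma wnorm_gt0 x : x != 0 -> 0 < wnorm b x.
Proof. by move=> x0; rewrite sqrtr_gt0 wip_gt0. Qed.

Lemma wip_self_div_wnorm x : x != 0 -> wip b x x / wnorm b x = wnorm b x.
Proof.
move=> x0; rewrite -{1}(sqr_sqrtr (wip_ge0 x)) expr2 mulfK //.
by rewrite gt_eqF // wnorm_gt0.
Qed.

Lemma wip_cauchy_schwarz x y : x != 0 -> y != 0 ->
  wip b x y <= wnorm b x * wnorm b y.
Proof.
move=> x0 y0; have nx := wnorm_gt0 x0; have ny := wnorm_gt0 y0.
set n := wnorm b x; set m := wnorm b y.
have nxy : 0 < n * m by rewrite mulr_gt0.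
have dist_ge0 : 0 <= \sum_(i < t.+1) (b i)%:R * (x ord0 i / n - y ord0 i / m) ^+ 2.
  by apply: sumr_ge0 => i _; rewrite mulr_ge0 ?ler0n ?sqr_ge0.
have expand : \sum_(i < t.+1) (b i)%:R * (x ord0 i / n - y ord0 i / m) ^+ 2 =
    wip b x x / n ^+ 2 - 2 * (wip b x y / (n * m)) + wip b y y / m ^+ 2.
  rewrite /wip !mulr_suml mulr_sumr -sumrB -big_split /=.
  by apply: eq_bigr => i _; field; rewrite !gt_eqF.
rewrite expand !sqr_sqrtr ?wip_ge0 ?divff ?gt_eqF ?wip_gt0 // in dist_ge0.
by rewrite -[n * m]mul1r -ler_pdivrMr //; lra.
Qed.

End WeightedInnerProduct.

Lemma sumr_ord_ltS (V : nmodType) t (F : 'I_t.+1 -> V) (k : 'I_t.+1) :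
  \sum_(i < t.+1 | (i < k.+1)%N) F i = \sum_(i < t.+1 | (i < k)%N) F i + F k.
Proof.
rewrite (bigD1 k) //= addrC; congr (_ + _); apply: eq_bigl => i.
by rewrite ltnS andbC ltn_neqAle.
Qed.

Lemma sumr_ord_ltT (V : nmodType) t (F : 'I_t.+1 -> V) :
  \sum_(i < t.+1 | (i < t.+1)%N) F i = \sum_(i < t.+1) F i.
Proof. by apply: eq_bigl => i; rewrite ltn_ord. Qed.

Lemma ler_norm_sumr (R : numDomainType) (I : finType) (F : I -> R) i :
  `|F i| <= \sum_j `|F j|.
Proof. by rewrite (bigD1 i) //= lerDl sumr_ge0. Qed.

Section Envelope.
Variables (R : realType) (t : nat) (b : 'I_t.+1 -> nat).
Hypothesis hb : forall i, (0 < b i)%N.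
Local Notation bs := (bsum R b).
Local Notation B := (bsum R b t.+1).

Lemma bsum0 : bs 0 = 0.
Proof. by rewrite /bsum big_pred0. Qed.

Lemma bsumS (k : 'I_t.+1) : bs k.+1 = bs k + (b k)%:R.
Proof. by rewrite /bsum -natrD sumr_ord_ltS. Qed.

Lemma bsum_ge0 k : 0 <= bs k.
Proof. exact: ler0n. Qed.

Lemma bsum_le j k : (j <= k)%N -> bs j <= bs k.
Proof.
move=> jk; rewrite ler_nat !(big_mkcond (fun i : 'I_t.+1 => (i < _)%N)) /=.
by apply: leq_sum => i _; case: ifP => [ij|//]; rewrite (leq_trans ij jk).
Qed.

Lemma bsum_ltS (k : 'I_t.+1) : bs k < bs k.+1.
Proof. by rewrite bsumS ltrDl ltr0n. Qed.

Lemma bsumD1_le j k : (j < k)%N -> (k <= t.+1)%N -> bs j + 1 <= bs k.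
Proof.
move=> jk kt; have jt : (j < t.+1)%N := leq_trans jk kt.
have := bsum_le jk; rewrite (bsumS (Ordinal jt)) /=.
have : 1 <= (b (Ordinal jt))%:R :> R by rewrite ler1n.
lra.
Qed.

Lemma bsum_last_gt0 : 0 < B.
Proof. by have := bsumD1_le (ltn0Sn t) (leqnn _); rewrite bsum0; lra. Qed.

Lemma Gamma_v_slope f (i : 'I_t.+1) :
  Gamma_v b f ord0 i = - slope f (bs i) (bs i.+1).
Proof. by rewrite mxE /slope bsumS [bs i + _]addrC addrK mulNr. Qed.

Lemma Gamma_v_weight f (i : 'I_t.+1) :
  (b i)%:R * Gamma_v b f ord0 i = f (bs i) - f (bs i.+1).
Proof. by rewrite mxE mulrC divfK ?pnatr_eq0 -?lt0n ?hb // opprB. Qed.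

Lemma Cbar_Gamma_v f : concave_on 0 B f -> Cbar (Gamma_v b f).
Proof.
move=> fc i j; rewrite leq_eqVlt => /orP[/eqP/val_inj -> // | ij].
rewrite !Gamma_v_slope lerN2; apply: (concave_slope_antitone fc).
- exact: bsum_ge0.
- exact: bsum_ltS.
- exact: bsum_le.
- exact: bsum_ltS.
- exact: bsum_le.
Qed.

Variable v : 'rV[R]_t.+1.
Local Notation ws := (wpt b v).
Local Notation S := (\sum_(k < t.+1) `|v ord0 k|).

Lemma wpt0 : ws 0 = 0.
Proof. by rewrite /wpt big_pred0 ?oppr0. Qed.

Lemma wptS (k : 'I_t.+1) : ws k.+1 = ws k - (b k)%:R * v ord0 k.
Proof. by rewrite /wpt sumr_ord_ltS opprD. Qed.

Lemma majorizes_graph_nodes g :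
  majorizes_graph b v g -> forall k, (k <= t.+1)%N -> ws k <= g (bs k).
Proof.
move=> gm k; rewrite leq_eqVlt => /orP[/eqP -> | kt]; last first.
  have := gm (Ordinal kt) (bs k) (lexx _) (ltW (bsum_ltS (Ordinal kt))).
  by rewrite subrr !mul0r addr0.
have unit_step : (bs t.+1 - bs t) / (b ord_max)%:R = 1.
  have := bsumS (@ord_max t); rewrite /= => ->.
  by rewrite [bs t + _]addrC addrK divff // pnatr_eq0 -lt0n hb.
have := gm ord_max (bs t.+1) (ltW (bsum_ltS ord_max)) (lexx _).
by rewrite /= unit_step mul1r addrC subrK.
Qed.

Lemma majorizes_graph_affine al be :
  (forall k, (k <= t.+1)%N -> ws k <= al + be * bs k) ->
  majorizes_graph b v (fun x => al + be * x).
Proof.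
move=> nodes k x kx xk.
have bk0 : 0 < (b k)%:R :> R by rewrite ltr0n.
set l := (x - bs k) / (b k)%:R.
have lb : l * (b k)%:R = x - bs k by rewrite divfK ?gt_eqF.
have l_ge0 : 0 <= l by rewrite divr_ge0 ?subr_ge0 // ltW.
have l_le1 : l <= 1 by rewrite ler_pdivrMr // mul1r; rewrite bsumS in xk; lra.
have left_node := nodes k (ltnW (ltn_ord k)).
have := nodes k.+1 (ltn_ord k); rewrite bsumS => right_node.
have l1_ge0 : 0 <= 1 - l by rewrite subr_ge0.
have := ler_wpM2l l1_ge0 left_node.
have := ler_wpM2l l_ge0 right_node.
have : be * (l * (b k)%:R) = be * (x - bs k) by rewrite lb.
lra.
Qed.

Lemma wpt_le_bsum j : ws j <= S * bs j.
Proof.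
rewrite /wpt /bsum natr_sum mulr_sumr -sumrN; apply: ler_sum => i _.
have vS : - v ord0 i <= S.
  by apply: le_trans (ler_norm_sumr _ i); rewrite -normrN ler_norm.
by rewrite -mulrN [S * _]mulrC ler_wpM2l ?ler0n.
Qed.

Hypothesis hv : \sum_(i < t.+1) v ord0 i * (b i)%:R = 0.

Lemma wpt_last : ws t.+1 = 0.
Proof.
apply/eqP; rewrite /wpt sumr_ord_ltT oppr_eq0 -[X in _ == X]hv.
by apply/eqP/eq_bigr => i _; rewrite mulrC.
Qed.

Lemma wpt_le_bsum_rest j : ws j <= S * (B - bs j).
Proof.
have vtot : \sum_(i < t.+1) (b i)%:R * v ord0 i = 0.
  by rewrite -[RHS]hv; apply: eq_bigr => i _; rewrite mulrC.
have -> : ws j = \sum_(i < t.+1 | ~~ (i < j)%N) (b i)%:R * v ord0 i.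
  by move: vtot; rewrite /wpt (bigID (fun i : 'I_t.+1 => (i < j)%N)) /=; lra.
have -> : B - bs j = \sum_(i < t.+1 | ~~ (i < j)%N) (b i)%:R.
  by rewrite /bsum !natr_sum sumr_ord_ltT (bigID (fun i : 'I_t.+1 => (i < j)%N)) /=; lra.
rewrite mulr_sumr; apply: ler_sum => i _.
have vS : v ord0 i <= S by apply: le_trans (ler_norm_sumr _ i); rewrite ler_norm.
by rewrite [S * _]mulrC ler_wpM2l ?ler0n.
Qed.

Lemma concave_majorant_ge0 g x : concave_on 0 B g -> majorizes_graph b v g ->
  0 <= x -> x <= B -> 0 <= g x.
Proof.
move=> gc gm x0 xB.
have g0 : 0 <= g 0 by have := majorizes_graph_nodes gm (leq0n _); rewrite wpt0 bsum0.
have gB : 0 <= g B by have := majorizes_graph_nodes gm (leqnn _); rewrite wpt_last.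
have three := concave_three_point gc (lexx 0) x0 xB (lexx B).
have left_ge0 : 0 <= (B - x) * g 0 by rewrite mulr_ge0 ?subr_ge0.
have right_ge0 : 0 <= (x - 0) * g B by rewrite mulr_ge0 ?subr0.
rewrite -(pmulr_rge0 _ bsum_last_gt0); lra.
Qed.

Lemma exists_least_concave_majorant : exists f, least_concave_majorant b v f.
Proof.
pose P : set (R -> R) := [set g | concave_on 0 B g /\ majorizes_graph b v g]%classic.
pose E x := [set g x | g in P]%classic.
have P_lin : P (fun x => 0 + S * x).
  split; first exact: affine_concave.
  by apply: majorizes_graph_affine => k _; rewrite add0r wpt_le_bsum.
have E_neq0 x : (E x !=set0)%classic by exists (0 + S * x); exists (fun y => 0 + S * y).
have inf_le x g : 0 <= x -> x <= B -> P g -> inf (E x) <= g x.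
  move=> x0 xB Pg; apply: ge_inf; last by exists g.
  by exists 0 => _ [h [hc hm] <-]; exact: concave_majorant_ge0 hc hm x0 xB.
exists (fun x => inf (E x)); split.
- move=> x y l x0 xB y0 yB l0 l1; apply: lb_le_inf => // _ [g Pg <-].
  have := Pg.1 x y l x0 xB y0 yB l0 l1.
  have := ler_wpM2l l0 (inf_le x g x0 xB Pg).
  have : (1 - l) * inf (E y) <= (1 - l) * g y by rewrite ler_wpM2l ?subr_ge0 ?inf_le.
  lra.
- by move=> k x kx xk; apply: lb_le_inf => // _ [g [_ gm] <-]; exact: gm.
- by move=> g gc gm x x0 xB; exact: inf_le.
Qed.

Lemma lcm_le_affine f al be : least_concave_majorant b v f ->
  (forall k, (k <= t.+1)%N -> ws k <= al + be * bs k) ->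
  forall x, 0 <= x -> x <= B -> f x <= al + be * x.
Proof.
by move=> [_ _ fmin] nodes; apply: fmin; [exact: affine_concave | exact: majorizes_graph_affine].
Qed.

Lemma lcm_ends f : least_concave_majorant b v f -> f (bs 0) = 0 /\ f B = 0.
Proof.
move=> Hf; have [_ fm _] := Hf; split; apply/le_anti/andP; split.
- have := lcm_le_affine (al := 0) (be := S) Hf _ (bsum_ge0 0) (bsum_le (leq0n _)).
  by rewrite bsum0 mulr0 addr0; apply=> k _; rewrite add0r wpt_le_bsum.
- by have := majorizes_graph_nodes fm (leq0n _); rewrite wpt0.
- have := lcm_le_affine (al := S * B) (be := - S) Hf _ (ltW bsum_last_gt0) (lexx B).
  rewrite mulNr subrr; apply=> k _; have := wpt_le_bsum_rest k; lra.
- by have := majorizes_graph_nodes fm (leqnn _); rewrite wpt_last.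
Qed.

Lemma lcm_touches_or_straight f k : least_concave_majorant b v f -> (k < t)%N ->
  f (bs k.+1) = ws k.+1 \/ Gamma_v b f ord0 (inord k) = Gamma_v b f ord0 (inord k.+1).
Proof.
(* Otherwise f is strictly above the graph and strictly bent at b_(k+1). Nodes are at distance
   >= 1 (integer weights), so by concavity the line through (b_(k+1), f(b_(k+1)) - eps) with the
   mean of the two adjacent slopes still majorizes the graph, contradicting minimality at b_(k+1). *)
move=> Hf kt; have [fc fm _] := Hf.
have kt1 : (k < t.+1)%N := ltnW kt.
have kt2 : (k.+2 <= t.+1)%N := kt.
rewrite !Gamma_v_slope !inordK //.
have p0 := bsum_ge0 k.
have pq := bsumD1_le (ltnSn k) kt1.
have qr := bsumD1_le (ltnSn k.+1) kt2.
have rB := bsum_le kt2.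
set d1 := slope f (bs k) (bs k.+1); set d2 := slope f (bs k.+1) (bs k.+2).
have [-> | d12] := eqVneq d1 d2; first by right.
have [|fq] := eqVneq (f (bs k.+1)) (ws k.+1); first by left.
exfalso.
have d21 : d2 < d1 by rewrite lt_def d12 (concave_slope_antitone fc) //; lra.
have wq : ws k.+1 < f (bs k.+1) by rewrite lt_def fq (majorizes_graph_nodes fm kt1).
pose eps := Num.min (f (bs k.+1) - ws k.+1) ((d1 - d2) / 2).
have eps_gt0 : 0 < eps by rewrite lt_min; apply/andP; split; lra.
have eps_gap : eps <= f (bs k.+1) - ws k.+1 by rewrite ge_min lexx.
have eps_kink : eps <= (d1 - d2) / 2 by rewrite ge_min lexx orbT.
suff : f (bs k.+1) <= f (bs k.+1) - eps - (d1 + d2) / 2 * bs k.+1 + (d1 + d2) / 2 * bs k.+1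
  by lra.
apply: (lcm_le_affine Hf) => [j jt||]; try lra.
have wj := majorizes_graph_nodes fm jt.
have pq' : bs k < bs k.+1 by lra.
have qr' : bs k.+1 < bs k.+2 by lra.
have kink := concave_below_kink fc p0 pq' qr' rB (bsum_ge0 j) (bsum_le jt).
rewrite -/d1 -/d2 in kink.
have kink_ge0 : 0 <= (d1 - d2) / 2 by lra.
case: (ltngtP j k.+1) => [jk | kj | ->]; last lra.
- have far : 1 <= `|bs j - bs k.+1|.
    by have := bsumD1_le jk kt1; move=> ?; rewrite ler0_norm; lra.
  have := ler_wpM2l kink_ge0 far.
  have := kink (or_introl (bsum_le (jk : (j <= k)%N))); lra.
- have far : 1 <= `|bs j - bs k.+1|.
    by have := bsumD1_le kj jt; move=> ?; rewrite ger0_norm; lra.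
  have := ler_wpM2l kink_ge0 far.
  have := kink (or_intror (bsum_le (kj : (k.+2 <= j)%N))); lra.
Qed.

Lemma wip_Gamma_v_subE f G : f (bs 0) = 0 -> f B = 0 ->
  wip b G (Gamma_v b f) - wip b G v =
  \sum_(i < t) (G ord0 (inord i.+1) - G ord0 (inord i)) * (f (bs i.+1) - ws i.+1).
Proof.
move=> f0 fB.
have -> : wip b G (Gamma_v b f) - wip b G v = \sum_(i < t.+1)
    G ord0 (inord i) * ((f (bs i) - ws i) - (f (bs i.+1) - ws i.+1)).
  rewrite /wip -sumrB; apply: eq_bigr => i _; rewrite inord_val wptS.
  have : G ord0 i * ((b i)%:R * Gamma_v b f ord0 i) =
         G ord0 i * (f (bs i) - f (bs i.+1)) by rewrite Gamma_v_weight.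
  lra.
(* The last term, at the junk index [inord t.+1], vanishes because f B = 0 = w_(t+1). *)
rewrite (@sumr_by_parts _ _ (fun k => G ord0 (inord k)) (fun k => f (bs k) - ws k)).
by rewrite f0 wpt0 fB wpt_last big_ord_recr /= fB wpt_last !subrr !mulr0 subrr add0r addr0.
Qed.

Lemma wip_le_Gamma_v f G : least_concave_majorant b v f -> Cbar G ->
  wip b G v <= wip b G (Gamma_v b f).
Proof.
move=> Hf cG; have [f0 fB] := lcm_ends Hf; have [_ fm _] := Hf.
rewrite -subr_ge0 wip_Gamma_v_subE //; apply: sumr_ge0 => i _.
have it : (i < t.+1)%N := ltnW (ltn_ord i).
have iSt : (i.+1 < t.+1)%N := ltn_ord i.
rewrite mulr_ge0 // subr_ge0; first by apply: cG; rewrite !inordK.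
by apply: (majorizes_graph_nodes fm); apply: ltnW.
Qed.

Lemma wip_Gamma_v_v f : least_concave_majorant b v f ->
  wip b (Gamma_v b f) v = wip b (Gamma_v b f) (Gamma_v b f).
Proof.
move=> Hf; have [f0 fB] := lcm_ends Hf.
apply/eqP; rewrite eq_sym -subr_eq0 wip_Gamma_v_subE //; apply/eqP/big1 => i _.
by case: (lcm_touches_or_straight Hf (ltn_ord i)) => ->; rewrite subrr ?mulr0 ?mul0r.
Qed.

End Envelope.

Theorem theorem2p2 (R : realType) (t : nat) (b : 'I_t.+1 -> nat)
  (v : 'rV[R]_t.+1)
  (hb : forall i, (0 < b i)%N)
  (hv0 : v != 0)
  (hvsum : \sum_(i < t.+1) v ord0 i * (b i)%:R = 0)
  (hpos : exists G : 'rV[R]_t.+1, [/\ Cbar G, G != 0 & 0 < mu b v G]) :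
  (exists f : R -> R, least_concave_majorant b v f) /\
  forall f : R -> R, least_concave_majorant b v f ->
    [/\ Cbar (Gamma_v b f), Gamma_v b f != 0 &
        forall G : 'rV[R]_t.+1, Cbar G -> G != 0 ->
          mu b v G <= mu b v (Gamma_v b f)].
Proof.
split; first exact: exists_least_concave_majorant.
move=> f Hf; have [fc _ _] := Hf.
have Gv_neq0 : Gamma_v b f != 0.
  apply/eqP => Gv0; have [G [cG _ muG]] := hpos.
  have := wip_le_Gamma_v hb hvsum Hf cG; rewrite Gv0 wip0r => Gv_le0.
  by move: muG; rewrite /mu ltNge mulr_le0_ge0 // invr_ge0 sqrtr_ge0.
split; [exact: (Cbar_Gamma_v hb fc) | exact: Gv_neq0 | move=> G cG G0].
rewrite [mu _ _ (Gamma_v b f)]/mu wip_Gamma_v_v // wip_self_div_wnorm //.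
rewrite /mu ler_pdivrMr ?wnorm_gt0 // mulrC.
exact: le_trans (wip_le_Gamma_v hb hvsum Hf cG) (wip_cauchy_schwarz hb G0 Gv_neq0).
Qed.
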